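(* For every $n\geq2$ and $c\geq1$, $|UD_n((1,1,c))|=n(n-1)(n^c-2^c)$.
   Context: Let $X$ be a finite alphabet with $n\geq 2$ letters and $X^*$ the set of words over $X$; $|v|$ is the length of a word $v$. A code over $X$ is a finite sequence $C=(v_1,\ldots,v_m)$ of words over $X$ such that every $w\in X^*$ has at most one factorization into code-words: if $w=v_{i_1}\cdots v_{i_l}=v_{j_1}\cdots v_{j_{l'}}$ with $l,l'\geq1$, then $l=l'$ and $i_t=j_t$ for all $t$. (Codes are sequences, not sets.) For a finite sequence $L=(a_1,\ldots,a_m)$ of positive integers, $UD_n(L)$ is the set of all codes $(v_1,\ldots,v_m)$ over an $n$-letter alphabet with $|v_i|=a_i$ for all $i$. *)

From mathcomp Require Import all_boot.
Set Implicit Arguments. Unset Strict Implicit. Unset Printing Implicit Defensive.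

Definition word (n : nat) := seq 'I_n.

Definition is_code (n : nat) (C : seq (word n)) : Prop :=
  forall ix jx : seq nat,
    ix != [::] -> jx != [::] ->
    all (fun i => i < size C) ix -> all (fun j => j < size C) jx ->
    flatten (map (nth [::] C) ix) = flatten (map (nth [::] C) jx) ->
    ix = jx.

Definition UD (n : nat) (L : seq nat) (C : seq (word n)) : Prop :=
  map size C = L /\ is_code C.

From mathcomp Require Import all_boot.
Set Implicit Arguments. Unset Strict Implicit. Unset Printing Implicit Defensive.

(* A triple ([a], [b], w) of words over an alphabet is a code exactly when
   a <> b and w contains a letter outside {a, b}.  Necessity: if a = b the
   one-letter words [a] and [b] are two factorizations of the same word, and
   if w is written over {a, b} it is also a product of the words [a], [b].
   Sufficiency: in a product of code-words, the first letter outside {a, b}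
   sits at position >= p, where p is its position in w, and at exactly p
   when the product starts with w; so a product starting with [a] or [b]
   never equals one starting with w, and two factorizations of the same word
   must agree block by block.

   Counting the triples then gives n choices for a, n - 1 for b, and
   n^c - 2^c words of length c not written over {a, b}.  The count
   holds for all n and c. *)

Lemma count_enum (T : finType) (P : pred T) : count P (enum T) = #|P|.
Proof. by rewrite cardE size_filter enumT. Qed.

Lemma allpairs_uniq_inj (S T R : eqType) (f : S -> T -> R) (s : seq S)
    (t : S -> seq T) :
  uniq s -> (forall x, uniq (t x)) ->
  (forall x x' y y', f x y = f x' y' -> x = x' /\ y = y') ->
  uniq [seq f x y | x <- s, y <- t x].
Proof.
move=> uniq_s uniq_t inj_f; apply: allpairs_uniq_dep => //.
by move=> [x y] [x' y'] _ _ /= /inj_f [eq_x eq_y]; rewrite eq_x eq_y.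
Qed.

Lemma size_allpairs_const (S : eqType) (T R : Type) (f : S -> T -> R)
    (s : seq S) (t : S -> seq T) (k : nat) :
  {in s, forall x, size (t x) = k} ->
  size [seq f x y | x <- s, y <- t x] = size s * k.
Proof.
elim: s => //= x s IH size_t; rewrite size_cat size_map size_t ?mem_head //.
by rewrite IH // => y s_y; apply: size_t; rewrite inE s_y orbT.
Qed.

Fixpoint words (T : finType) (k : nat) : seq (seq T) :=
  if k is k'.+1 then [seq x :: v | x <- enum T, v <- words T k'] else [:: [::]].

Lemma mem_words (T : finType) (k : nat) (v : seq T) :
  (v \in words T k) = (size v == k).
Proof.
elim: k v => [|k IH] [|x v] //=.
  by apply/allpairsPdep => -[? [? []]].
rewrite eqSS -IH; apply/allpairsPdep/idP => [[y [u [_ u_in [_ ->]]]] //|].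
by move=> v_in; exists x, v; rewrite mem_enum.
Qed.

Lemma words_uniq (T : finType) (k : nat) : uniq (words T k).
Proof.
elim: k => //= k IH.
by apply: allpairs_uniq_inj => [|//|x x' v v' [-> ->]]; rewrite ?enum_uniq.
Qed.

Lemma count_all_words (T : finType) (P : pred T) (k : nat) :
  count (all P) (words T k) = #|P| ^ k.
Proof.
elim: k => //= k IH; rewrite expnS -IH -count_enum.
elim: (enum T) => //= x s IHs; rewrite count_cat IHs count_map mulnDl.
congr (_ + _); case: (boolP (P x)) => Px.
- by rewrite mul1n; apply: eq_count => v /=; rewrite Px.
- rewrite mul0n (eq_count (a2 := pred0)) ?count_pred0 // => v /=.
  by rewrite (negbTE Px).
Qed.

Lemma size_words (T : finType) (k : nat) : size (words T k) = #|T| ^ k.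
Proof.
by rewrite -count_predT -(eq_count (a1 := all predT)) ?count_all_words // => v;
  rewrite all_predT.
Qed.

Definition outside (T : eqType) (a b : T) : pred T := predC (mem [:: a; b]).

Section TwoLettersAndAWord.
Variables (n : nat) (a b : 'I_n) (w : word n).

Local Notation C := [:: [:: a]; [:: b]; w].
Local Notation product ix := (flatten (map (nth [::] C) ix)).
Local Notation out := (outside a b).

Lemma outside_ab (l : 'I_n) : l \in [:: a; b] -> out l = false.
Proof. by rewrite /outside /= => ->. Qed.

(* In any product of the code-words (indexed by ix, out-of-range indices
   standing for the empty word), the first letter outside {a, b} occurs no
   earlier than it does in w. *)
Lemma find_outside_product (ix : seq nat) :
  has out (product ix) -> find out w <= find out (product ix).
Proof.
elim: ix => //= i ix IH.
case: i => [|[|[|i]]] /=; rewrite ?find_cat ?has_cat //.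
- by rewrite outside_ab ?mem_head // => /IH/leqW.
- by rewrite outside_ab ?inE ?eqxx ?orbT // => /IH/leqW.
- by case: ifP => // _ _; apply: leq_trans (find_size _ _) (leq_addr _ _).
- by rewrite nth_nil.
Qed.

Lemma letter_neq_word (l : 'I_n) (ix : seq nat) (t : word n) :
  l \in [:: a; b] -> has out w -> l :: product ix <> w ++ t.
Proof.
move=> ab_l out_w eq_lw; have out_l := outside_ab ab_l.
have has_ix : has out (product ix).
  by move: (congr1 (has out) eq_lw); rewrite has_cat out_w /= out_l.
have := congr1 (find out) eq_lw; rewrite /= out_l find_cat out_w => find_eq.
by have := find_outside_product has_ix; rewrite -find_eq ltnn.
Qed.

Section Sufficiency.
Hypotheses (neq_ab : a != b) (out_w : has out w).

Lemma code_word_nonempty (i : nat) : i < 3 -> nth [::] C i != [::].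
Proof. by case: i => [|[|[|]]] //= _; case: (w) out_w. Qed.

Lemma distinct_blocks (i j : nat) (ix jx : seq nat) :
  i < 3 -> j < 3 -> i != j ->
  nth [::] C i ++ product ix <> nth [::] C j ++ product jx.
Proof.
wlog lt_ij : i j ix jx / i < j.
  move=> gen lt_i lt_j; rewrite neq_ltn => /orP[lt_ij|lt_ji] eq_st.
  - exact: gen lt_ij lt_i lt_j (negbT (ltn_eqF lt_ij)) eq_st.
  - exact: gen lt_ji lt_j lt_i (negbT (ltn_eqF lt_ji)) (esym eq_st).
case: i j lt_ij => [|[|[|]]] [|[|[|[|]]]] //= _ _ _ _.
- by case=> eq_ab; move: neq_ab; rewrite eq_ab eqxx.
- exact: letter_neq_word (mem_head _ _) out_w.
- by apply: letter_neq_word out_w; rewrite !inE eqxx orbT.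
Qed.

(* Unique factorization, by cancelling equal first code-words. *)
Lemma product_injective (ix jx : seq nat) :
  all (fun i => i < 3) ix -> all (fun j => j < 3) jx ->
  product ix = product jx -> ix = jx.
Proof.
elim: ix jx => [|i ix IH] [|j jx] //=.
- by move=> _ /andP[/code_word_nonempty]; case: (nth _ _ j).
- by move=> /andP[/code_word_nonempty]; case: (nth _ _ i).
move=> /andP[lt_i all_ix] /andP[lt_j all_jx] eq_prod.
have [eq_ij|ne_ij] := eqVneq i j; last first.
  by case: (distinct_blocks lt_i lt_j ne_ij eq_prod).
by move/eqP: eq_prod; rewrite eq_ij eqseq_cat // eqxx => /eqP/IH ->.
Qed.

Lemma code_of_outside : is_code C.
Proof. by move=> ix jx _ _; apply: product_injective. Qed.

End Sufficiency.

(* Necessity of a <> b: otherwise [a] and [b] factor the same word. *)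
Lemma code_neq_letters : is_code C -> a != b.
Proof.
move=> code; apply/eqP => eq_ab.
by have := code [:: 0] [:: 1]; rewrite /= eq_ab => /(_ isT isT isT isT erefl).
Qed.

Lemma product_spelling (v : word n) :
  all (mem [:: a; b]) v -> product [seq (x != a) : nat | x <- v] = v.
Proof.
elim: v => //= x v IH /andP[ab_x /IH ->].
have [-> //|ne_xa] := eqVneq x a.
by move: ab_x; rewrite !inE (negbTE ne_xa) => /eqP ->.
Qed.

(* Necessity of a letter of w outside {a, b}: otherwise w is also spelled by
   [a] and [b] (or, if w is empty, w = w w). *)
Lemma code_outside : is_code C -> has out w.
Proof.
move=> code; rewrite /outside has_predC; apply/negP => ab_w.
have [w_nil|w_nonnil] := eqVneq w [::].
  have := code [:: 2] [:: 2; 2] isT isT isT isT.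
  by rewrite /= w_nil => /(_ erefl).
pose spell := [seq (x != a) : nat | x <- w].
have spell_nonnil : spell != [::] by rewrite -size_eq0 size_map size_eq0.
have spell_small : all (fun i => i < 3) spell.
  by apply/allP => _ /mapP[x _ ->]; case: (x != a).
have := code spell [:: 2] spell_nonnil isT spell_small isT.
rewrite product_spelling //= cats0 => /(_ erefl)/(congr1 (fun s => 2 \in s)).
by rewrite mem_head => /mapP[x _]; case: (x != a).
Qed.

Lemma code_triple_iff : is_code C <-> a != b /\ has out w.
Proof.
split=> [code|[neq_ab out_w]]; last exact: code_of_outside.
by split; [apply: code_neq_letters | apply: code_outside].
Qed.

End TwoLettersAndAWord.

Definition distinct_pairs (T : finType) : seq (T * T) :=
  [seq (x, y) | x <- enum T, y <- [seq y <- enum T | y != x]].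

Lemma mem_distinct_pairs (T : finType) (p : T * T) :
  (p \in distinct_pairs T) = (p.1 != p.2).
Proof.
apply/allpairsPdep/idP => [[x [y [_ + ->]]]|neq_p].
  by rewrite mem_filter eq_sym => /andP[].
by exists p.1, p.2; rewrite mem_filter eq_sym neq_p !mem_enum; case: p neq_p.
Qed.

Lemma distinct_pairs_uniq (T : finType) : uniq (distinct_pairs T).
Proof.
apply: allpairs_uniq_inj => [|x|x x' y y' [-> ->]] //.
  exact: enum_uniq.
by rewrite filter_uniq ?enum_uniq.
Qed.

Lemma size_distinct_pairs (T : finType) :
  size (distinct_pairs T) = #|T| * #|T|.-1.
Proof.
rewrite (@size_allpairs_const _ _ _ _ _ _ #|T|.-1) -?cardT // => x _.
by rewrite size_filter count_enum -(cardC1 x).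
Qed.

Definition words_outside (n k : nat) (a b : 'I_n) : seq (word n) :=
  [seq v <- words 'I_n k | has (outside a b) v].

(* Among the n^k words of length k, exactly 2^k are written over {a, b}. *)
Lemma size_words_outside (n k : nat) (a b : 'I_n) : a != b ->
  size (words_outside k a b) = n ^ k - 2 ^ k.
Proof.
move=> neq_ab; rewrite size_filter.
have /card_uniqP card_ab : uniq [:: a; b] by rewrite /= inE neq_ab.
have := count_predC (all (mem [:: a; b])) (words 'I_n k).
rewrite count_all_words card_ab size_words card_ord => <-.
rewrite addKn; apply: eq_count => v.
by rewrite /outside has_predC.
Qed.

Definition codes_112 (n k : nat) : seq (seq (word n)) :=
  [seq [:: [:: p.1]; [:: p.2]; v] | p <- distinct_pairs 'I_n,
                                    v <- words_outside k p.1 p.2].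

Lemma codes_112_uniq (n k : nat) : uniq (codes_112 n k).
Proof.
apply: allpairs_uniq_inj => [|p|[a b] [a' b'] v v' [-> -> ->]] //.
- exact: distinct_pairs_uniq.
- by rewrite filter_uniq ?words_uniq.
Qed.

Lemma mem_codes_112 (n k : nat) (C : seq (word n)) :
  C \in codes_112 n k <-> UD [:: 1; 1; k] C.
Proof.
split=> [/allpairsPdep[p [v [+ + ->]]]|[sizes code]].
  rewrite mem_distinct_pairs mem_filter mem_words.
  move=> neq_p /andP[out_v /eqP size_v].
  by split; [rewrite /= size_v | apply/code_triple_iff].
case: C sizes code => [|x [|y [|v []]]] //= [size_x size_y size_v].
case: x size_x => [|a []] // _; case: y size_y => [|b []] // _.
move=> /code_triple_iff[neq_ab out_v]; apply/allpairsPdep; exists (a, b), v.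
by rewrite mem_distinct_pairs mem_filter mem_words out_v size_v eqxx.
Qed.

Lemma size_codes_112 (n k : nat) :
  size (codes_112 n k) = n * (n - 1) * (n ^ k - 2 ^ k).
Proof.
rewrite (@size_allpairs_const _ _ _ _ _ _ (n ^ k - 2 ^ k)).
  by rewrite size_distinct_pairs card_ord subn1.
by move=> p; rewrite mem_distinct_pairs; apply: size_words_outside.
Qed.

Theorem proposition2 (n c : nat) (hn : 2 <= n) (hc : 1 <= c) :
  exists s : seq (seq (word n)),
    [/\ uniq s,
        (forall C : seq (word n), C \in s <-> @UD n [:: 1; 1; c] C)
      & size s = n * (n - 1) * (n ^ c - 2 ^ c)].
Proof.
exists (codes_112 n c); split.
- exact: codes_112_uniq.
- exact: mem_codes_112.
- exact: size_codes_112.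
Qed.
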